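(* Let $n\ge 3$ and let $CH_n$ be the closed Helm graph. Then $$\chi'(CH_n)=\begin{cases}3(n+1) & \text{if } n \text{ is even},\\ 3n+7 & \text{if } n \text{ is odd}.\end{cases}$$
   Context: The closed Helm graph $CH_n$ has vertices $v, v_1,\dots,v_n,u_1,\dots,u_n$; $v_1\dots v_n$ form a cycle, $u_1\dots u_n$ form a cycle (in this order), $v$ is adjacent to every $v_i$, and $u_i$ is adjacent to $v_i$ for each $i$ (i.e. the Helm graph with its pendant vertices joined into an outer cycle). For a proper colouring $c:V(G)\to\{1,\dots,k\}$ (colour $c_i$ identified with $i$), the colouring sum is $\sum_{i=1}^k i\,\theta(c_i)=\sum_v c(v)$, $\theta(c_i)$ the number of vertices of colour $c_i$. The $\chi$-chromatic sum $\chi'(G)$ is the minimum colouring sum over all proper colourings $c:V(G)\to\{1,\dots,\chi(G)\}$, $\chi(G)$ the chromatic number. *)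

From mathcomp Require Import all_boot.
Set Implicit Arguments. Unset Strict Implicit. Unset Printing Implicit Defensive.

Section Colouring.
Variable T : finType.
Variable e : rel T.

(* A proper colouring with k colours; colour (i : 'I_k) is identified with i+1. *)
Definition proper_colouring (k : nat) (c : T -> 'I_k) : bool :=
  [forall x, forall y, e x y ==> (c x != c y)].

Definition colourable (k : nat) : bool :=
  [exists c : {ffun T -> 'I_k}, proper_colouring c].

(* chromatic number: least k such that a proper k-colouring exists
   (#|T| colours always suffice, so the default is never the minimum's witness
   unless it is the true value). *)
Definition chromatic_number : nat :=
  \big[minn/#|T|]_(k < #|T|.+1 | colourable k) k.

Definition colouring_sum (k : nat) (c : T -> 'I_k) : nat :=
  \sum_(x : T) (nat_of_ord (c x)).+1.

(* chi-chromatic sum: minimum colouring sum over proper colourings using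
   colours 1..chi(G). Default #|T| * chi(G) is an upper bound of every such sum. *)
Definition chi_chromatic_sum : nat :=
  \big[minn/(#|T| * chromatic_number)]_(c : {ffun T -> 'I_chromatic_number}
        | proper_colouring c) colouring_sum c.
End Colouring.

(* Closed Helm graph CH_n.
   None = hub v; Some (i, false) = v_(i+1) (inner cycle); Some (i, true) = u_(i+1). *)
Definition CH_vertex (n : nat) : finType := option ('I_n * bool).

Definition cyc_adj (n : nat) (i j : 'I_n) : bool :=
  (nat_of_ord j == i.+1 %% n) || (nat_of_ord i == j.+1 %% n).

Definition CH_adj (n : nat) : rel (CH_vertex n) := fun x y =>
  match x, y with
  | None, Some (_, b) => ~~ b
  | Some (_, b), None => ~~ b
  | Some (i, b), Some (j, b') =>
      ((b == b') && cyc_adj i j) || ((i == j) && (b != b'))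
  | None, None => false
  end.

From mathcomp Require Import all_boot all_order zify.
Set Implicit Arguments. Unset Strict Implicit. Unset Printing Implicit Defensive.

(* Shift colours to start at 0, so a colouring sum is the sum of the shifted
   colours plus #|V| = 2n+1.  In a proper colouring of an n-cycle every colour
   class has at most n/2 vertices, and an odd cycle needs a third colour; hence
   a rim whose colours lie in the levels a < b < c has colour sum at least
   n a + (b - a) uphalf(n) + (c - b) [n odd].  The outer rim uses levels 0,1,2,
   the inner rim the three smallest colours other than the hub's, and every
   choice of the hub colour gives a total of at least n + 2 + 4 [n odd].  This
   is attained by colouring the rims alternately with the hub coloured 2 when n
   is even; when n is odd the rims are patched at their last vertices and the
   hub gets colour 3, which is forced anyway since the hub and the odd inner
   rim need 4 colours. *)

Lemma bigmin_nat_eq (I : finType) (P : pred I) (F : I -> nat) d m :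
  (exists2 i, P i & F i = m) -> (forall i, P i -> m <= F i) -> m <= d ->
  \big[minn/d]_(i | P i) F i = m.
Proof.
move=> [i Pi <-] ge_m le_md; apply/eqP; rewrite eqn_leq.
(* [minn] is [Order.min] on [nat] only up to conversion, hence the explicit [nat] *)
apply/andP; split; first exact: (@Order.TotalTheory.bigmin_le_cond _ nat _ _ _ _ _ Pi).
by apply/(@Order.TotalTheory.bigmin_geP _ nat).
Qed.

Section Colourings.
Variables (T : finType) (e : rel T).

Lemma proper_colouringP k (c : T -> 'I_k) :
  reflect (forall x y, e x y -> c x != c y) (proper_colouring e c).
Proof.
apply: (iffP forallP) => [pc x y exy | pc x]; last first.
  by apply/forallP => y; apply/implyP; apply: pc.
by move/forallP/(_ y)/implyP: (pc x); apply.
Qed.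

Lemma colouring_sumE k (c : T -> 'I_k) : colouring_sum c = \sum_x c x + #|T|.
Proof.
rewrite /colouring_sum -[#|T|]muln1 -sum_nat_const -big_split /=.
by apply: eq_bigr => x _; rewrite addn1.
Qed.

Definition inord_colouring k (col : T -> nat) : {ffun T -> 'I_k.+1} :=
  [ffun x => inord (col x)].

Variables (k : nat) (col : T -> nat).
Hypothesis col_lt : forall x, col x < k.+1.

Lemma inord_colouringE x : inord_colouring k col x = col x :> nat.
Proof. by rewrite ffunE inordK. Qed.

Lemma proper_inord_colouring :
  (forall x y, e x y -> col x != col y) -> proper_colouring e (inord_colouring k col).
Proof. by move=> pc; apply/proper_colouringP => x y /pc; rewrite -!inord_colouringE. Qed.

Lemma colouring_sum_inord : colouring_sum (inord_colouring k col) = \sum_x col x + #|T|.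
Proof. by rewrite colouring_sumE; under eq_bigr do rewrite inord_colouringE. Qed.

End Colourings.

Lemma sum_ge_levels (I : finType) (G : I -> nat) a b c : a <= b <= c ->
  (forall i, G i = a \/ G i = b \/ c <= G i) ->
  #|I| * a + (b - a) * \sum_i (G i != a) + (c - b) * \sum_i ((G i != a) && (G i != b))
    <= \sum_i G i.
Proof.
move=> /andP [ab bc] levels.
rewrite -sum_nat_const !big_distrr -!big_split /=.
apply: leq_sum => i _; case: (levels i) => [-> | [-> | cG]]; rewrite ?eqxx /=.
- lia.
- by case: eqP; lia.
- by do 2 case: eqP; lia.
Qed.

Definition cycle_colouring (T : eqType) n (F : 'I_n -> T) : Prop :=
  forall i, F i != F (ordS i).

Lemma big_ordS (R : Type) (idx : R) (op : Monoid.com_law idx) n (F : 'I_n -> R) :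
  \big[op/idx]_(i < n) F (ordS i) = \big[op/idx]_(i < n) F i.
Proof. by rewrite [RHS](reindex_inj (@ordS_inj n)). Qed.

Section CycleColouring.
Variables (T : eqType) (n : nat) (F : 'I_n -> T).
Hypothesis F_cycle : cycle_colouring F.

Lemma cycle_colouring_class_le a : 2 * \sum_(i < n) (F i == a) <= n.
Proof.
have pair_le1 i : (F i == a) + (F (ordS i) == a) <= 1.
  move: (F_cycle i); case: (F i =P a) => [->|_]; case: (F (ordS i) =P a) => [->|_] //.
  by rewrite eqxx.
rewrite mul2n -addnn -{2}(big_ordS _ (fun i => nat_of_bool (F i == a))) -big_split /=.
apply: leq_trans (leq_sum _ (fun i _ => pair_le1 i)) _.
by rewrite sum_nat_const card_ord muln1.
Qed.

Lemma odd_cycle_colouring_three a b :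
  odd n -> exists i, (F i != a) && (F i != b).
Proof.
move=> odd_n.
case: (pickP (fun i => (F i != a) && (F i != b))) => [i ab_i | in_ab]; first by exists i.
have two_valued i : (F i == a) || (F i == b).
  by move/negbT: (in_ab i); rewrite negb_and !negbK.
have alt i : (F (ordS i) == a) = ~~ (F i == a).
  move: (F_cycle i) (two_valued i) (two_valued (ordS i)); move: (F i) (F (ordS i)) => x y ne_xy.
  case/orP=> /eqP ex; case/orP=> /eqP ey; subst x y; rewrite ?eqxx // in ne_xy *.
  by rewrite eq_sym (negbTE ne_xy).
have : \sum_(i < n) (F i == a) + \sum_(i < n) (F i == a) = n.
  rewrite -{2}(big_ordS _ (fun i => nat_of_bool (F i == a))) -big_split /=.
  rewrite -[X in _ = X]card_ord -sum1_card.
  by apply: eq_bigr => i _; rewrite alt; case: (F i == a).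
by move=> sum2; exfalso; move: odd_n; rewrite -sum2 addnn odd_double.
Qed.

End CycleColouring.

Lemma cycle_colouring_sum_ge n (F : 'I_n -> nat) a b c :
  cycle_colouring F -> a <= b <= c -> (forall i, F i = a \/ F i = b \/ c <= F i) ->
  n * a + (b - a) * uphalf n + (c - b) * odd n <= \sum_(i < n) F i.
Proof.
move=> F_cycle abc levels; apply: leq_trans (sum_ge_levels abc levels); rewrite card_ord.
have count_ne_a : uphalf n <= \sum_(i < n) (F i != a).
  have count_a := cycle_colouring_class_le F_cycle a.
  have : \sum_(i < n) (F i != a) + \sum_(i < n) (F i == a) = n.
    rewrite -big_split -[X in _ = X]card_ord -sum1_card /=.
    by apply: eq_bigr => i _; case: (F i == a).
  by have := uphalf_half n; have := odd_double_half n; lia.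
have count_ne_ab : odd n <= \sum_(i < n) ((F i != a) && (F i != b)).
  case: (boolP (odd n)) => // /(odd_cycle_colouring_three F_cycle a b) [i ab_i].
  by rewrite (bigD1 i) //= ab_i.
by apply: leq_add; [apply: leq_add|]; rewrite // leq_mul2l ?count_ne_a ?count_ne_ab orbT.
Qed.

Lemma card_CH_vertex n : #|CH_vertex n| = (2 * n).+1.
Proof. by rewrite card_option card_prod card_ord card_bool mulnC. Qed.

Lemma sum_CH_vertex n (F : CH_vertex n -> nat) :
  \sum_x F x = F None + \sum_(i < n) F (Some (i, false)) + \sum_(i < n) F (Some (i, true)).
Proof.
rewrite (bigD1 None) //= (reindex_omap Some id) //=; last by case.
rewrite -addnA; congr (_ + _).
under eq_bigl do rewrite eqxx.
rewrite (eq_bigr (fun p => F (Some (p.1, p.2)))); last by case.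
rewrite -(pair_bigA _ (fun i b => F (Some (i, b)))) -big_split /=.
by apply: eq_bigr => i _; rewrite big_bool addnC.
Qed.

Lemma CH_properP n (T : eqType) (col : CH_vertex n -> T) :
  (forall x y, CH_adj x y -> col x != col y) <->
  [/\ forall i, col None != col (Some (i, false)),
      forall i, col (Some (i, false)) != col (Some (i, true)) &
      forall b, cycle_colouring (fun i => col (Some (i, b)))].
Proof.
split=> [proper | [hub_spoke spoke rim]].
  split=> [i | i | b i]; apply: proper => //=; first by rewrite eqxx.
  by rewrite eqxx /cyc_adj eqxx.
move=> [[i b]|] [[j b']|] //=.
- case/orP=> [/andP [/eqP <- /orP [/eqP ej | /eqP ei]] | /andP [/eqP <- bb']].
  + have -> : j = ordS i by exact: val_inj.
    exact: rim.
  + have -> : i = ordS j by exact: val_inj.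
    rewrite eq_sym; exact: rim.
  + by case: b b' bb' => -[] // _; rewrite // eq_sym.
- by case: b => // _; rewrite eq_sym.
- by case: b'.
Qed.

Lemma hub_rim_sum_ge n h (V : 'I_n -> nat) : 3 <= n ->
  cycle_colouring V -> (forall i, V i != h) ->
  n./2 + 2 + 3 * odd n <= h + \sum_(i < n) V i.
Proof.
move=> n_ge3 V_cycle V_ne_h.
have sum_ge a b c : a <= b <= c -> (forall x, x != h -> x = a \/ x = b \/ c <= x) ->
    n * a + (b - a) * uphalf n + (c - b) * odd n <= \sum_(i < n) V i.
  by move=> abc levels; apply: cycle_colouring_sum_ge => // i; apply/levels/V_ne_h.
have := uphalf_half n; have := odd_double_half n.
case: h {V_ne_h} sum_ge => [|[|[|h]]] sum_ge.
- by have := sum_ge 1 2 3 isT (fun x => ltac:(lia)); lia.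
- by have := sum_ge 0 2 3 isT (fun x => ltac:(lia)); lia.
- by have := sum_ge 0 1 3 isT (fun x => ltac:(lia)); lia.
- by have := sum_ge 0 1 2 isT (fun x => ltac:(lia)); lia.
Qed.

Lemma CH_sum_colours_ge n (col : CH_vertex n -> nat) : 3 <= n ->
  (forall x y, CH_adj x y -> col x != col y) -> n + 2 + 4 * odd n <= \sum_x col x.
Proof.
move=> n_ge3 /CH_properP [hub_spoke _ rim]; rewrite sum_CH_vertex.
have inner := hub_rim_sum_ge n_ge3 (rim false) (fun i => ltac:(by rewrite eq_sym)).
have outer := @cycle_colouring_sum_ge _ _ 0 1 2 (rim true) isT (fun i => ltac:(lia)).
have := uphalf_half n; have := odd_double_half n.
by case: (odd n) inner outer => /= inner outer; lia.
Qed.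

Lemma sum_odd k : \sum_(i < k) odd i = k./2.
Proof.
elim: k => [|k IH]; first by rewrite big_ord0.
by rewrite big_ord_recr /= IH uphalf_half addnC.
Qed.

Lemma sum_even k : \sum_(i < k) ~~ odd i = uphalf k.
Proof. by rewrite -[RHS]/(k.+1./2) -sum_odd big_ord_recl. Qed.

Lemma val_ordS n (i : 'I_n) : ordS i = (if i.+1 == n then 0 else i.+1) :> nat.
Proof.
rewrite /=; case: eqP => [-> | ne]; first by rewrite modnn.
by rewrite modn_small // ltn_neqAle ltn_ord andbT; apply/eqP.
Qed.

Definition CH_col n (x : CH_vertex n) : nat :=
  match x with
  | None => 2 + odd n
  | Some (i, false) => if odd n && (i == n.-1 :> nat) then 2 else odd i
  | Some (i, true) =>
      if odd n && (i == n.-1 :> nat) then 0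
      else if odd n && (i == n.-2 :> nat) then 2 else ~~ odd i
  end.

Lemma CH_col_lt n (x : CH_vertex n) : CH_col x < 3 + odd n.
Proof. by case: x => [[i []]|] /=; repeat case: ifP; lia. Qed.

Lemma CH_col_proper n : 3 <= n ->
  forall x y : CH_vertex n, CH_adj x y -> CH_col x != CH_col y.
Proof.
move=> n_ge3; apply/CH_properP; split=> [i | i | b i].
- by rewrite /=; repeat case: ifP; lia.
- by rewrite /=; repeat case: ifP; lia.
- have := ltn_ord i; have := val_ordS i; move: (ordS i) => j j_val /=; rewrite j_val.
  by case: b; repeat case: ifP; lia.
Qed.

Lemma big_ord_patch_last k (F : nat -> nat) x :
  \sum_(i < k.+1) (if i == k :> nat then x else F i) = \sum_(i < k) F i + x.
Proof.
rewrite big_ord_recr /= eqxx; congr (_ + _).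
by apply: eq_bigr => i _; rewrite ltn_eqF.
Qed.

Lemma sum_CH_col n : 3 <= n -> \sum_(x : CH_vertex n) CH_col x = n + 2 + 4 * odd n.
Proof.
move=> n_ge3; rewrite sum_CH_vertex /=.
case: (boolP (odd n)) => [odd_n | even_n] /=.
- case: n n_ge3 odd_n => [|[|k]] // _ odd_k /=.
  rewrite (big_ord_patch_last _ odd).
  rewrite (big_ord_patch_last _ (fun i => if i == k then 2 else ~~ odd i)).
  rewrite (big_ord_patch_last _ (fun i => ~~ odd i)) sum_odd sum_even.
  have := uphalf_half k; have := odd_double_half k.
  by move: odd_k; rewrite /= negbK => ->; lia.
- rewrite sum_odd sum_even.
  by have := uphalf_half n; have := odd_double_half n; rewrite (negbTE even_n); lia.
Qed.

Lemma CH_num_colours_ge n k (col : CH_vertex n -> nat) : 3 <= n ->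
  (forall x y, CH_adj x y -> col x != col y) -> (forall x, col x < k) -> 3 + odd n <= k.
Proof.
move=> n_ge3 /CH_properP [hub_spoke _ rim] col_lt.
case: (boolP (odd n)) => [odd_n | _].
  rewrite leqNgt; apply/negP => k_le3.
  have [i /=] :=
    odd_cycle_colouring_three (rim false) ((col None).+1 %% 3) ((col None).+2 %% 3) odd_n.
  have := hub_spoke i; have := col_lt None; have := col_lt (Some (i, false)).
  (* generalizing makes lia see one atom per vertex: the hypotheses spell the
     vertex type of [col] differently *)
  by move: (col None) (col (Some (i, false))); lia.
have n_gt0 : 0 < n by lia.
pose i0 : 'I_n := Ordinal n_gt0.
have := hub_spoke i0; have := hub_spoke (ordS i0); have := rim false i0.
have := col_lt None; have := col_lt (Some (i0, false)); have := col_lt (Some (ordS i0, false)).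
by move: (col None) (col (Some (i0, false))) (col (Some (ordS i0, false))); lia.
Qed.

Lemma colourable_CH n k : 3 <= n -> colourable (@CH_adj n) k = (3 + odd n <= k).
Proof.
move=> n_ge3; apply/existsP/idP => [[c /proper_colouringP proper] | k_ge].
  by apply: (@CH_num_colours_ge _ _ (fun x => c x)) => // x; apply: ltn_ord.
case: k k_ge => // k k_ge; exists (inord_colouring k (@CH_col n)).
apply: proper_inord_colouring (CH_col_proper n_ge3) => x.
exact: leq_trans (CH_col_lt x) k_ge.
Qed.

Lemma chromatic_number_CH n : 3 <= n -> chromatic_number (@CH_adj n) = 3 + odd n.
Proof.
move=> n_ge3; apply: bigmin_nat_eq => [|k|]; rewrite ?colourable_CH //.
  have chi_lt : 3 + odd n < #|CH_vertex n|.+1 by rewrite card_CH_vertex; lia.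
  by exists (Ordinal chi_lt); rewrite ?colourable_CH.
by rewrite card_CH_vertex; lia.
Qed.

Theorem theorem2p9 (n : nat) (hn : 3 <= n) :
  chi_chromatic_sum (@CH_adj n) = (if odd n then 3 * n + 7 else 3 * (n + 1)).
Proof.
rewrite /chi_chromatic_sum; move: (chromatic_number _) (chromatic_number_CH hn) => _ ->.
have -> : (if odd n then 3 * n + 7 else 3 * (n + 1)) = n + 2 + 4 * odd n + #|CH_vertex n|.
  by rewrite card_CH_vertex; case: (odd n); lia.
apply: bigmin_nat_eq.
- exists (inord_colouring (2 + odd n) (@CH_col n)).
    exact: proper_inord_colouring (@CH_col_lt n) (CH_col_proper hn).
  by rewrite colouring_sum_inord ?sum_CH_col //; apply: CH_col_lt.
- move=> c /proper_colouringP proper; rewrite colouring_sumE leq_add2r.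
  exact: CH_sum_colours_ge.
- by rewrite card_CH_vertex; case: (odd n); lia.
Qed.
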